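(* Let $A,J\in\mathbb{R}^{n\times n}$ and $0<T_{\min}\le T_{\max}$. Assume there exists a symmetric positive definite matrix $P\in\mathbb{R}^{n\times n}$ such that $$J^Te^{A^T\theta}Pe^{A\theta}J-P\prec 0\quad\text{for all }\theta\in[T_{\min},T_{\max}].$$ Then for any impulse sequence in $\mathbb{I}_{[T_{\min},T_{\max}]}$, the impulsive system (S) is globally asymptotically stable.
   Context: The impulsive system (S) is: $\dot x(t)=Ax(t)$ for $t\neq t_k$; $x^+(t)=Jx(t)$ for $t=t_k$, $k\in\{1,2,\dots\}$; $x(t_0)=x_0\in\mathbb{R}^n$. The state $x(t)$ is left-continuous and $x^+(t):=\lim_{s\downarrow t}x(s)$. The impulse times $\{t_1,t_2,\dots\}$ form a strictly increasing sequence in $(t_0,\infty)$, either finite, or infinite and unbounded, with $T_k:=t_{k+1}-t_k>\epsilon$ for some $\epsilon>0$. For a set $\mathcal{S}\subseteq(0,\infty)$, $\mathbb{I}_{\mathcal{S}}$ denotes the set of impulse sequences $\{t_1,t_2,\dots\}$ with $t_{k+1}-t_k\in\mathcal{S}$ for all $k$. For symmetric matrices, $M\prec 0$ ($M\succ0$) means negative (positive) definite. *)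

(* classical reals. Vectors in R^n are functions nat -> R
   (only indices < n are meaningful); n x n matrices are nat -> nat -> R. *)
From Stdlib Require Import Reals Lra Lia ClassicalEpsilon Factorial.
Open Scope R_scope.

Fixpoint vsum (n : nat) (f : nat -> R) : R :=
  match n with O => 0 | S m => vsum m f + f m end.

Definition vec := nat -> R.
Definition mat := nat -> nat -> R.

Definition mmul (n : nat) (A B : mat) : mat :=
  fun i j => vsum n (fun k => A i k * B k j).
Definition mtr (A : mat) : mat := fun i j => A j i.
Definition msub (A B : mat) : mat := fun i j => A i j - B i j.
Definition mid : mat := fun i j => if Nat.eqb i j then 1 else 0.
Fixpoint mpow (n : nat) (A : mat) (k : nat) : mat :=
  match k with O => mid | S k' => mmul n A (mpow n A k') end.
Definition mvec (n : nat) (A : mat) (v : vec) : vec :=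
  fun i => vsum n (fun k => A i k * v k).

Definition quad (n : nat) (M : mat) (v : vec) : R :=
  vsum n (fun i => v i * mvec n M v i).
Definition nonzero_vec (n : nat) (v : vec) : Prop := exists i, (i < n)%nat /\ v i <> 0.
Definition symmetric (n : nat) (M : mat) : Prop :=
  forall i j, (i < n)%nat -> (j < n)%nat -> M i j = M j i.
Definition pos_def (n : nat) (M : mat) : Prop :=
  forall v, nonzero_vec n v -> 0 < quad n M v.
Definition neg_def (n : nat) (M : mat) : Prop :=
  forall v, nonzero_vec n v -> quad n M v < 0.

Definition expm (n : nat) (A : mat) (t : R) : mat :=
  fun i j => epsilon (inhabits 0)
    (fun l => Un_cv (fun N => sum_f_R0 (fun k => t ^ k / INR (Factorial.fact k) * mpow n A k i j) N) l).

Definition vnorm (n : nat) (v : vec) : R := sqrt (vsum n (fun i => v i ^ 2)).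

Definition right_lim (f : R -> R) (t L : R) : Prop :=
  forall eps, 0 < eps -> exists delta, 0 < delta /\
    forall s, t < s < t + delta -> Rabs (f s - L) < eps.
Definition left_lim (f : R -> R) (t L : R) : Prop :=
  forall eps, 0 < eps -> exists delta, 0 < delta /\
    forall s, t - delta < s < t -> Rabs (f s - L) < eps.

(* impulse sequences: tseq k is t_{k+1} (first impulse is tseq 0);
   membership in I_[Tmin,Tmax] with initial time t0 *)
Definition impulse_seq_in (t0 Tmin Tmax : R) (tseq : nat -> R) : Prop :=
  t0 < tseq 0%nat /\
  forall k, Tmin <= tseq (S k) - tseq k <= Tmax.

Definition is_impulse_time (tseq : nat -> R) (s : R) : Prop := exists k, tseq k = s.

Definition is_solution (n : nat) (A J : mat) (t0 : R) (tseq : nat -> R)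
    (x0 : vec) (x : R -> vec) : Prop :=
  (forall i, (i < n)%nat -> x t0 i = x0 i) /\
  (forall i, (i < n)%nat -> right_lim (fun s => x s i) t0 (x0 i)) /\
  (forall s, t0 < s -> ~ is_impulse_time tseq s ->
     forall i, (i < n)%nat -> derivable_pt_lim (fun r => x r i) s (mvec n A (x s) i)) /\
  (forall s, t0 < s -> forall i, (i < n)%nat -> left_lim (fun r => x r i) s (x s i)) /\
  (forall k i, (i < n)%nat ->
     right_lim (fun r => x r i) (tseq k) (mvec n J (x (tseq k)) i)).

Definition GAS (n : nat) (A J : mat) (t0 : R) (tseq : nat -> R) : Prop :=
  (forall eps, 0 < eps -> exists delta, 0 < delta /\
     forall x0 x, is_solution n A J t0 tseq x0 x -> vnorm n x0 < delta ->
       forall s, t0 <= s -> vnorm n (x s) < eps) /\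
  (forall x0 x, is_solution n A J t0 tseq x0 x ->
     forall eps, 0 < eps -> exists T, forall s, T <= s -> vnorm n (x s) < eps).

(* Let V(v) = v^T P v.  Between impulses a solution is given by the matrix
   exponential, x(t) = e^{(t - t_k) A} J x(t_k), because a Gronwall estimate
   makes solutions of x' = A x unique.  Hence V(x(t_{k+1})) is the quadratic
   form J^T e^{A^T T} P e^{A T} J at x(t_k), with T = t_{k+1} - t_k.  Since
   theta |-> e^{theta A} is continuous, a compactness argument on
   [Tmin, Tmax] x (unit sphere) turns the pointwise hypothesis into a uniform
   contraction V(x(t_{k+1})) <= rho V(x(t_k)) with rho < 1.  Together with the
   Gronwall growth bound on each inter-impulse interval this yields
   |x(t)|^2 <= B rho^k |x0|^2 on (t_k, t_{k+1}], from which stability and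
   attractivity follow. *)
From Stdlib Require Import Reals Lra Lia ClassicalEpsilon Classical FunctionalExtensionality Factorial.
From Coquelicot Require Import Coquelicot.
Open Scope R_scope.

Lemma vsum_ext n f g : (forall i, (i < n)%nat -> f i = g i) -> vsum n f = vsum n g.
Proof.
  induction n as [|n IH]; intros H; simpl; auto.
  rewrite IH by (intros; apply H; lia). rewrite H by lia. reflexivity.
Qed.

Lemma vsum_plus n f g : vsum n (fun i => f i + g i) = vsum n f + vsum n g.
Proof. induction n; simpl; [lra|]. rewrite IHn; lra. Qed.

Lemma vsum_minus n f g : vsum n (fun i => f i - g i) = vsum n f - vsum n g.
Proof. induction n; simpl; [lra|]. rewrite IHn; lra. Qed.

Lemma vsum_scal_l n c f : vsum n (fun i => c * f i) = c * vsum n f.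
Proof. induction n; simpl; [lra|]. rewrite IHn; lra. Qed.

Lemma vsum_scal_r n c f : vsum n (fun i => f i * c) = vsum n f * c.
Proof. induction n; simpl; [lra|]. rewrite IHn; lra. Qed.

Lemma vsum_zero n : vsum n (fun _ => 0) = 0.
Proof. induction n; simpl; [lra|]. rewrite IHn; lra. Qed.

Lemma vsum_swap n m (f : nat -> nat -> R) :
  vsum n (fun i => vsum m (fun j => f i j)) = vsum m (fun j => vsum n (fun i => f i j)).
Proof.
  induction n as [|n IH]; simpl; [rewrite vsum_zero; auto|].
  rewrite IH, <- vsum_plus; auto.
Qed.

Lemma vsum_le n f g : (forall i, (i < n)%nat -> f i <= g i) -> vsum n f <= vsum n g.
Proof.
  induction n as [|n IH]; intros H; simpl; [lra|].
  assert (vsum n f <= vsum n g) by (apply IH; intros; apply H; lia).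
  assert (f n <= g n) by (apply H; lia). lra.
Qed.

Lemma vsum_nonneg n f : (forall i, (i < n)%nat -> 0 <= f i) -> 0 <= vsum n f.
Proof. intros H. rewrite <- (vsum_zero n). apply vsum_le; auto. Qed.

Lemma vsum_abs n f : Rabs (vsum n f) <= vsum n (fun i => Rabs (f i)).
Proof.
  induction n; simpl; [rewrite Rabs_R0; lra|].
  eapply Rle_trans; [apply Rabs_triang|]. lra.
Qed.

Lemma vsum_term_le n f k :
  (forall i, (i < n)%nat -> 0 <= f i) -> (k < n)%nat -> f k <= vsum n f.
Proof.
  induction n as [|n IH]; intros H Hk; simpl; [lia|].
  assert (0 <= vsum n f) by (apply vsum_nonneg; intros; apply H; lia).
  assert (0 <= f n) by (apply H; lia).
  destruct (Nat.eq_dec k n) as [->|]; [lra|].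
  assert (f k <= vsum n f) by (apply IH; [intros; apply H|]; lia). lra.
Qed.

Lemma vsum_mid n i y : (i < n)%nat -> vsum n (fun l => mid i l * y l) = y i.
Proof.
  induction n as [|n IH]; intros Hi; [lia|]. simpl. unfold mid at 2.
  destruct (Nat.eqb_spec i n) as [->|Hne].
  - rewrite (vsum_ext n _ (fun _ => 0)), vsum_zero; [ring|].
    intros l Hl. unfold mid. destruct (Nat.eqb_spec n l); [lia|ring].
  - rewrite IH by lia. ring.
Qed.

Lemma lim_plus {T} (F : (T -> Prop) -> Prop) {FF : Filter F} f g l m :
  filterlim f F (locally l) -> filterlim g F (locally m) ->
  filterlim (fun x => f x + g x) F (locally (l + m)).
Proof.
  intros Hf Hg. apply (filterlim_comp_2 f g Rplus Hf Hg).
  apply (@filterlim_plus R_AbsRing R_NormedModule).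
Qed.

Lemma lim_mult {T} (F : (T -> Prop) -> Prop) {FF : Filter F} f g l m :
  filterlim f F (locally l) -> filterlim g F (locally m) ->
  filterlim (fun x => f x * g x) F (locally (l * m)).
Proof.
  intros Hf Hg. apply (filterlim_comp_2 f g Rmult Hf Hg).
  apply (@filterlim_mult R_AbsRing).
Qed.

Lemma lim_minus {T} (F : (T -> Prop) -> Prop) {FF : Filter F} f g l m :
  filterlim f F (locally l) -> filterlim g F (locally m) ->
  filterlim (fun x => f x - g x) F (locally (l - m)).
Proof.
  intros Hf Hg. apply (lim_plus F f (fun x => - g x)); auto.
  apply (filterlim_comp _ _ _ g Ropp F (locally m) (locally (- m)) Hg).
  apply (@filterlim_opp R_AbsRing R_NormedModule).
Qed.

Lemma lim_vsum {T} (F : (T -> Prop) -> Prop) {FF : Filter F} n (f : nat -> T -> R) l :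
  (forall i, (i < n)%nat -> filterlim (f i) F (locally (l i))) ->
  filterlim (fun x => vsum n (fun i => f i x)) F (locally (vsum n l)).
Proof.
  induction n as [|n IH]; intros H; simpl; [apply filterlim_const|].
  apply (lim_plus F); [apply IH; intros|]; apply H; lia.
Qed.

Lemma derive_vsum m (f : nat -> R -> R) d x :
  (forall l, (l < m)%nat -> derivable_pt_lim (f l) x (d l)) ->
  derivable_pt_lim (fun t => vsum m (fun l => f l t)) x (vsum m d).
Proof.
  induction m as [|m IH]; intros H; simpl; [apply derivable_pt_lim_const|].
  apply (derivable_pt_lim_plus (fun t => vsum m (fun l => f l t)) (f m));
    [apply IH; intros|]; apply H; lia.
Qed.

Lemma cont_vsum m (f : nat -> R -> R) x :
  (forall l, (l < m)%nat -> continuity_pt (f l) x) ->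
  continuity_pt (fun t => vsum m (fun l => f l t)) x.
Proof.
  induction m as [|m IH]; intros H; simpl.
  - apply continuity_pt_const. intros u v; auto.
  - apply (continuity_pt_plus (fun t => vsum m (fun l => f l t)) (f m));
      [apply IH; intros|]; apply H; lia.
Qed.

Lemma ball_R (x e y : R) : ball x e y <-> Rabs (y - x) < e.
Proof. reflexivity. Qed.

Lemma right_lim_iff f t L : right_lim f t L <-> filterlim f (at_right t) (locally L).
Proof.
  unfold right_lim. rewrite filterlim_locally. split.
  - intros H eps. destruct (H eps (cond_pos eps)) as [d [Hd Hs]].
    exists (mkposreal d Hd). intros y Hy Hty. apply Hs.
    assert (Hy' : Rabs (y - t) < d) by exact Hy. apply Rabs_lt_between in Hy'. lra.
  - intros H eps Heps. destruct (H (mkposreal eps Heps)) as [d Hd].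
    exists d. split; [apply cond_pos|]. intros s Hs. apply Hd; [|lra].
    apply ball_R, Rabs_def1; lra.
Qed.

Lemma left_lim_iff f t L : left_lim f t L <-> filterlim f (at_left t) (locally L).
Proof.
  unfold left_lim. rewrite filterlim_locally. split.
  - intros H eps. destruct (H eps (cond_pos eps)) as [d [Hd Hs]].
    exists (mkposreal d Hd). intros y Hy Hty. apply Hs.
    assert (Hy' : Rabs (y - t) < d) by exact Hy. apply Rabs_lt_between in Hy'. lra.
  - intros H eps Heps. destruct (H (mkposreal eps Heps)) as [d Hd].
    exists d. split; [apply cond_pos|]. intros s Hs. apply Hd; [|lra].
    apply ball_R, Rabs_def1; lra.
Qed.

Lemma cont_lim F {FF : Filter F} f x :
  continuity_pt f x -> filter_le F (locally x) -> filterlim f F (locally (f x)).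
Proof.
  intros Hc Hle. apply continuity_pt_filterlim in Hc.
  eapply filterlim_filter_le_1; eauto.
Qed.

Definition ss n (v : vec) : R := vsum n (fun i => v i * v i).
Definition dot n (u v : vec) : R := vsum n (fun i => u i * v i).
Definition mnorm n (M : mat) : R := vsum n (fun i => vsum n (fun j => Rabs (M i j))).

Lemma ss_nonneg n v : 0 <= ss n v.
Proof. apply vsum_nonneg; intros; nra. Qed.

Lemma ss_term n v i : (i < n)%nat -> v i * v i <= ss n v.
Proof. intros. apply (vsum_term_le n (fun i => v i * v i)); auto; intros; nra. Qed.

Lemma mnorm_nonneg n M : 0 <= mnorm n M.
Proof. apply vsum_nonneg; intros; apply vsum_nonneg; intros; apply Rabs_pos. Qed.

Lemma vnorm_ss n v : vnorm n v = sqrt (ss n v).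
Proof. unfold vnorm, ss. f_equal. apply vsum_ext; intros; ring. Qed.

Lemma vnorm_lt_of_ss n v eps : 0 < eps -> ss n v < eps * eps -> vnorm n v < eps.
Proof.
  intros Heps H. rewrite vnorm_ss, <- (sqrt_square eps) by lra.
  apply sqrt_lt_1_alt. split; [apply ss_nonneg|auto].
Qed.

Lemma ss_lt_of_vnorm_lt n v d : vnorm n v < d -> ss n v < d * d.
Proof.
  rewrite vnorm_ss. intros H. pose proof (sqrt_pos (ss n v)).
  rewrite <- (sqrt_sqrt (ss n v)) by apply ss_nonneg. nra.
Qed.

Lemma prod_le_ss n v i j : (i < n)%nat -> (j < n)%nat -> Rabs (v i * v j) <= ss n v.
Proof.
  intros Hi Hj. assert (Hvi := ss_term n v i Hi). assert (Hvj := ss_term n v j Hj).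
  rewrite Rabs_mult.
  assert (Rabs (v i) * Rabs (v i) = v i * v i) by (rewrite <- Rabs_mult; apply Rabs_pos_eq; nra).
  assert (Rabs (v j) * Rabs (v j) = v j * v j) by (rewrite <- Rabs_mult; apply Rabs_pos_eq; nra).
  pose proof (Rabs_pos (v i)). pose proof (Rabs_pos (v j)). nra.
Qed.

Lemma quad_expand n M v :
  quad n M v = vsum n (fun i => vsum n (fun k => M i k * (v i * v k))).
Proof.
  unfold quad, mvec. apply vsum_ext; intros i _. rewrite <- vsum_scal_l.
  apply vsum_ext; intros; ring.
Qed.

Lemma quad_bound n M v : Rabs (quad n M v) <= mnorm n M * ss n v.
Proof.
  rewrite quad_expand. eapply Rle_trans; [apply vsum_abs|].
  unfold mnorm. rewrite <- vsum_scal_r. apply vsum_le; intros i Hi.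
  eapply Rle_trans; [apply vsum_abs|]. rewrite <- vsum_scal_r. apply vsum_le; intros k Hk.
  rewrite Rabs_mult. apply Rmult_le_compat_l; [apply Rabs_pos|]. apply prod_le_ss; auto.
Qed.

Lemma mvec_ext n M u v i : (forall k, (k < n)%nat -> u k = v k) -> mvec n M u i = mvec n M v i.
Proof. intros H. unfold mvec. apply vsum_ext; intros. rewrite H; auto. Qed.

Lemma dot_ext n u1 u2 w1 w2 :
  (forall k, (k < n)%nat -> u1 k = u2 k) -> (forall k, (k < n)%nat -> w1 k = w2 k) ->
  dot n u1 w1 = dot n u2 w2.
Proof. intros H1 H2. unfold dot. apply vsum_ext; intros. rewrite H1, H2; auto. Qed.

Lemma quad_ext n M u v : (forall k, (k < n)%nat -> u k = v k) -> quad n M u = quad n M v.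
Proof.
  intros H. unfold quad. apply vsum_ext; intros. rewrite H, (mvec_ext n M u v); auto.
Qed.

Lemma ss_ext n u v : (forall k, (k < n)%nat -> u k = v k) -> ss n u = ss n v.
Proof. intros H. unfold ss. apply vsum_ext; intros. rewrite H; auto. Qed.

Lemma mvec_mmul n X Y v i : mvec n (mmul n X Y) v i = mvec n X (mvec n Y v) i.
Proof.
  unfold mvec, mmul.
  transitivity (vsum n (fun k => vsum n (fun j => X i j * (Y j k * v k)))).
  - apply vsum_ext; intros. rewrite <- vsum_scal_r. apply vsum_ext; intros; ring.
  - rewrite vsum_swap. apply vsum_ext; intros. rewrite <- vsum_scal_l. auto.
Qed.

Lemma mvec_minus n A u v i : mvec n A (fun k => u k - v k) i = mvec n A u i - mvec n A v i.
Proof. unfold mvec. rewrite <- vsum_minus. apply vsum_ext; intros; ring. Qed.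

Lemma dot_mtr n B u w : dot n u (mvec n (mtr B) w) = dot n (mvec n B u) w.
Proof.
  unfold dot, mvec, mtr.
  transitivity (vsum n (fun i => vsum n (fun k => B k i * u i * w k))).
  - apply vsum_ext; intros. rewrite <- vsum_scal_l. apply vsum_ext; intros; ring.
  - rewrite vsum_swap. apply vsum_ext; intros. rewrite <- vsum_scal_r. auto.
Qed.

Lemma quad_dot n M v : quad n M v = dot n v (mvec n M v).
Proof. reflexivity. Qed.

Lemma quad_msub n X Y v : quad n (msub X Y) v = quad n X v - quad n Y v.
Proof.
  unfold quad, mvec, msub. rewrite <- vsum_minus. apply vsum_ext; intros.
  rewrite <- Rmult_minus_distr_l, <- vsum_minus. f_equal. apply vsum_ext; intros; ring.
Qed.

Lemma quad_opp n P v : quad n (fun i j => - P i j) v = - quad n P v.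
Proof.
  rewrite !quad_expand.
  replace (- _) with (-1 * vsum n (fun i => vsum n (fun k => P i k * (v i * v k)))) by ring.
  rewrite <- vsum_scal_l. apply vsum_ext; intros. rewrite <- vsum_scal_l. apply vsum_ext; intros; ring.
Qed.

Lemma quad_scal n M c v : quad n M (fun i => c * v i) = c * c * quad n M v.
Proof.
  rewrite !quad_expand, <- vsum_scal_l. apply vsum_ext; intros.
  rewrite <- vsum_scal_l. apply vsum_ext; intros; ring.
Qed.

Lemma ss_scal n c v : ss n (fun i => c * v i) = c * c * ss n v.
Proof. unfold ss. rewrite <- vsum_scal_l. apply vsum_ext; intros; ring. Qed.

Lemma quad_congr n J E P v :
  quad n (mmul n (mtr J) (mmul n (mtr E) (mmul n P (mmul n E J)))) v =
  quad n P (mvec n E (mvec n J v)).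
Proof.
  rewrite !quad_dot, <- !dot_mtr. apply dot_ext; auto; intros k _.
  rewrite !mvec_mmul. apply mvec_ext; intros. rewrite !mvec_mmul.
  apply mvec_ext; intros. rewrite mvec_mmul. apply mvec_ext; intros. apply mvec_mmul.
Qed.

(* |J v|^2 = v^T (J^T J) v <= mnorm (J^T J) |v|^2. *)
Lemma ss_mvec_le n J v : ss n (mvec n J v) <= mnorm n (mmul n (mtr J) J) * ss n v.
Proof.
  assert (E : ss n (mvec n J v) = quad n (mmul n (mtr J) J) v).
  { rewrite quad_dot. unfold ss. fold (dot n (mvec n J v) (mvec n J v)). rewrite <- dot_mtr.
    apply dot_ext; auto; intros. rewrite mvec_mmul. auto. }
  rewrite E. eapply Rle_trans; [apply Rle_abs|apply quad_bound].
Qed.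

Lemma ss_zero_coord n v : ss n v <= 0 -> forall i, (i < n)%nat -> v i = 0.
Proof. intros H i Hi. pose proof (ss_term n v i Hi). pose proof (ss_nonneg n v). nra. Qed.

Lemma nonzero_of_ss n v : 0 < ss n v -> nonzero_vec n v.
Proof.
  intros H. apply NNPP; intros Hz. assert (ss n v <= 0); [|lra].
  unfold ss. rewrite <- (vsum_zero n). apply vsum_le. intros i Hi.
  destruct (Req_dec (v i) 0) as [E|E]; [rewrite E; lra|].
  exfalso; apply Hz; exists i; auto.
Qed.

Lemma lim_ss {T} (F : (T -> Prop) -> Prop) {FF : Filter F} n (v : T -> vec) v0 :
  (forall i, (i < n)%nat -> filterlim (fun x => v x i) F (locally (v0 i))) ->
  filterlim (fun x => ss n (v x)) F (locally (ss n v0)).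
Proof.
  intros Hv. apply (lim_vsum F n (fun i x => v x i * v x i)).
  intros i Hi. apply (lim_mult F); apply Hv; auto.
Qed.

Lemma lim_quad {T} (F : (T -> Prop) -> Prop) {FF : Filter F} n (M : T -> mat) (v : T -> vec) M0 v0 :
  (forall i j, (i < n)%nat -> (j < n)%nat -> filterlim (fun x => M x i j) F (locally (M0 i j))) ->
  (forall i, (i < n)%nat -> filterlim (fun x => v x i) F (locally (v0 i))) ->
  filterlim (fun x => quad n (M x) (v x)) F (locally (quad n M0 v0)).
Proof.
  intros HM Hv. apply (lim_vsum F n (fun i x => v x i * mvec n (M x) (v x) i)).
  intros i Hi. apply (lim_mult F); [apply Hv; auto|].
  apply (lim_vsum F n (fun j x => M x i j * v x j)).
  intros j Hj. apply (lim_mult F); [apply HM|apply Hv]; auto.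
Qed.

(* Compactness.  A reindexing [phi] with [filterlim phi eventually eventually]
   extracts a subsequence; limits along it are Coquelicot's [is_lim_seq]. *)

Lemma reindex_unbounded (phi : nat -> nat) :
  (forall k, (k <= phi k)%nat) -> filterlim phi eventually eventually.
Proof. intros H P [N HN]. exists N. intros k Hk. apply HN. specialize (H k). lia. Qed.

Lemma is_lim_seq_inv_S : is_lim_seq (fun k => / INR (S k)) 0.
Proof.
  apply (is_lim_seq_inv (fun k => INR (S k)) p_infty); [|discriminate].
  apply (is_lim_seq_incr_1 INR). apply is_lim_seq_INR.
Qed.

Lemma bw_interval (u : nat -> R) a b : (forall k, a <= u k <= b) ->
  exists phi l, filterlim phi eventually eventually /\ a <= l <= b /\
    is_lim_seq (fun k => u (phi k)) l.
Proof.
  intros Hu.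
  destruct (Bolzano_Weierstrass u (fun c => a <= c <= b) (compact_P3 a b) Hu) as [l Hl].
  assert (Hpick : forall Nk : nat * nat, exists p,
             (fst Nk <= p)%nat /\ Rabs (u p - l) < / INR (S (snd Nk))).
  { intros [N k]. assert (Hpos : 0 < / INR (S k)) by (apply Rinv_0_lt_compat, lt_0_INR; lia).
    destruct (Hl (disc l (mkposreal _ Hpos)) N) as [p Hp].
    - exists (mkposreal _ Hpos). intros y Hy; auto.
    - exists p; exact Hp. }
  destruct (choice _ Hpick) as [pick Hp].
  set (phi := fix phi k := match k with
                           | O => pick (O, O)
                           | S k' => pick (S (phi k'), S k') end).
  assert (Hphi : forall k, (k <= phi k)%nat /\ Rabs (u (phi k) - l) < / INR (S k)).
  { induction k as [|k IH]; simpl; [split; [lia|apply (Hp (O, O))]|].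
    destruct (Hp (S (phi k), S k)) as [H1 H2]. simpl in *. split; [lia|exact H2]. }
  assert (Hlim : is_lim_seq (fun k => u (phi k)) l).
  { apply is_lim_seq_le_le with (fun k => l - / INR (S k)) (fun k => l + / INR (S k)).
    - intros k. destruct (Hphi k) as [_ H]. apply Rabs_lt_between in H. lra.
    - replace (Finite l) with (Rbar_minus l 0) by (simpl; f_equal; ring).
      apply is_lim_seq_minus'; [apply is_lim_seq_const|apply is_lim_seq_inv_S].
    - replace (Finite l) with (Rbar_plus l 0) by (simpl; f_equal; ring).
      apply is_lim_seq_plus'; [apply is_lim_seq_const|apply is_lim_seq_inv_S]. }
  exists phi, l. split; [apply reindex_unbounded; intros; apply Hphi|]. split; [|exact Hlim].
  split.
  - apply (is_lim_seq_le (fun _ => a) (fun k => u (phi k)) a l); auto.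
    + intros k; apply Hu.
    + apply is_lim_seq_const.
  - apply (is_lim_seq_le (fun k => u (phi k)) (fun _ => b) l b); auto.
    + intros k; apply Hu.
    + apply is_lim_seq_const.
Qed.

Lemma bw_coords m (u : nat -> nat -> R) B :
  (forall i k, (i < m)%nat -> Rabs (u i k) <= B) ->
  exists phi (l : vec), filterlim phi eventually eventually /\
    forall i, (i < m)%nat -> is_lim_seq (fun k => u i (phi k)) (l i).
Proof.
  induction m as [|m IH]; intros Hb.
  - exists (fun k => k), (fun _ => 0). split; [|intros; lia].
    apply reindex_unbounded; auto.
  - destruct IH as [phi [l [Hphi Hl]]]; [intros; apply Hb; lia|].
    destruct (bw_interval (fun k => u m (phi k)) (-B) B) as [psi [lm [Hpsi [_ Hlm]]]].
    { intros k. apply Rabs_le_between, Hb; lia. }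
    exists (fun k => phi (psi k)), (fun i => if Nat.eqb i m then lm else l i). split.
    + exact (filterlim_comp _ _ _ psi phi _ _ _ Hpsi Hphi).
    + intros i Hi. destruct (Nat.eqb_spec i m) as [->|Hne]; auto.
      apply (is_lim_seq_subseq (fun k => u i (phi k))); auto. apply Hl; lia.
Qed.

Lemma bw_param_sphere n a b (th : nat -> R) (w : nat -> vec) :
  (forall k, a <= th k <= b) -> (forall k, ss n (w k) = 1) ->
  exists phi th0 (w0 : vec), filterlim phi eventually eventually /\
    a <= th0 <= b /\ ss n w0 = 1 /\
    is_lim_seq (fun k => th (phi k)) th0 /\
    forall i, (i < n)%nat -> is_lim_seq (fun k => w (phi k) i) (w0 i).
Proof.
  intros Hth Hw.
  destruct (bw_coords n (fun i k => w k i) 1) as [phi [w0 [Hphi Hw0]]].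
  { intros i k Hi. pose proof (ss_term n (w k) i Hi) as Hwi. rewrite Hw in Hwi.
    apply Rabs_le. nra. }
  destruct (bw_interval (fun k => th (phi k)) a b) as [psi [th0 [Hpsi [Hab Hth0]]]]; auto.
  assert (Hlim : forall i, (i < n)%nat -> is_lim_seq (fun k => w (phi (psi k)) i) (w0 i)).
  { intros i Hi. apply (is_lim_seq_subseq (fun k => w (phi k) i)); auto. }
  exists (fun k => phi (psi k)), th0, w0.
  split; [exact (filterlim_comp _ _ _ psi phi _ _ _ Hpsi Hphi)|].
  split; [exact Hab|]. split; [|split; auto].
  assert (H1 : is_lim_seq (fun k => ss n (w (phi (psi k)))) (ss n w0))
    by (apply (lim_ss eventually); auto).
  assert (H2 : is_lim_seq (fun k => ss n (w (phi (psi k)))) 1).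
  { apply is_lim_seq_ext with (fun _ => 1); [intros; rewrite Hw; auto|apply is_lim_seq_const]. }
  apply is_lim_seq_unique in H1, H2. rewrite H1 in H2. injection H2; auto.
Qed.

Lemma normalize n M v c : 0 < c -> - c * ss n v < quad n M v ->
  exists w, ss n w = 1 /\ - c < quad n M w.
Proof.
  intros Hc Hlt.
  assert (Hs : 0 < ss n v).
  { destruct (Rle_lt_dec (ss n v) 0) as [Hle|]; auto. exfalso.
    pose proof (quad_bound n M v) as Hq. pose proof (mnorm_nonneg n M).
    assert (ss n v = 0) by (pose proof (ss_nonneg n v); lra).
    apply Rabs_le_between in Hq. nra. }
  set (r := sqrt (ss n v)). assert (Hr : 0 < r) by (apply sqrt_lt_R0; auto).
  assert (Hrr : r * r = ss n v) by (apply sqrt_sqrt; lra).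
  exists (fun i => / r * v i). split.
  - rewrite ss_scal, <- Hrr. field. lra.
  - rewrite quad_scal. apply Rmult_lt_reg_l with (r * r); [nra|].
    replace (r * r * (/ r * / r * quad n M v)) with (quad n M v) by (field; lra).
    rewrite Hrr. nra.
Qed.

Lemma unif_neg_def n (F : R -> mat) a b :
  (forall i j, (i < n)%nat -> (j < n)%nat -> forall th, a <= th <= b ->
     continuity_pt (fun t => F t i j) th) ->
  (forall th, a <= th <= b -> neg_def n (F th)) ->
  exists c, 0 < c /\ forall th v, a <= th <= b -> quad n (F th) v <= - c * ss n v.
Proof.
  intros Hc Hneg. apply NNPP; intros Hno.
  assert (Hbad : forall m : nat, exists p : R * vec, a <= fst p <= b /\ ss n (snd p) = 1 /\
            - / INR (S m) < quad n (F (fst p)) (snd p)).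
  { intros m. assert (Hpos : 0 < / INR (S m)) by (apply Rinv_0_lt_compat, lt_0_INR; lia).
    apply NNPP; intros Hnot. apply Hno. exists (/ INR (S m)). split; auto.
    intros th v Hth. apply Rnot_lt_le. intros Hlt. apply Hnot.
    destruct (normalize n (F th) v _ Hpos Hlt) as [w Hw]. exists (th, w); auto. }
  destruct (choice _ Hbad) as [p Hp].
  destruct (bw_param_sphere n a b (fun m => fst (p m)) (fun m => snd (p m)))
    as [phi [th0 [w0 [Hphi [Hab [Hw0 [Hth Hw]]]]]]]; try (intros; apply Hp).
  (* In the limit the form is nonnegative at the unit vector w0. *)
  assert (Hlim : is_lim_seq (fun k => quad n (F (fst (p (phi k)))) (snd (p (phi k))) + / INR (S (phi k)))
                   (quad n (F th0) w0 + 0)).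
  { apply (lim_plus eventually).
    - apply (lim_quad eventually); auto. intros i j Hi Hj.
      apply (filterlim_comp _ _ _ _ (fun t => F t i j) eventually (locally th0)); [exact Hth|].
      apply continuity_pt_filterlim, Hc; auto.
    - apply (is_lim_seq_subseq (fun k => / INR (S k)) 0); auto. apply is_lim_seq_inv_S. }
  assert (Hge : 0 <= quad n (F th0) w0 + 0).
  { refine (is_lim_seq_le (fun _ => 0) _ 0 _ _ (is_lim_seq_const 0) Hlim).
    intros k. destruct (Hp (phi k)) as [_ [_ H]]. lra. }
  assert (Hlt := Hneg th0 Hab w0 (nonzero_of_ss n w0 ltac:(lra))). lra.
Qed.

Lemma pos_def_coercive n P : pos_def n P ->
  exists c, 0 < c /\ forall v, c * ss n v <= quad n P v.
Proof.
  intros HP.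
  destruct (unif_neg_def n (fun _ i j => - P i j) 0 0) as [c [Hc Hbound]].
  - intros; apply continuity_pt_const; intros u v; auto.
  - intros _ _ v Hv. rewrite quad_opp. specialize (HP v Hv). lra.
  - exists c. split; auto. intros v. specialize (Hbound 0 v ltac:(lra)).
    rewrite quad_opp in Hbound. lra.
Qed.

(* Entry (i, j) of [expm n A t] is the power series
   with coefficients (A^k)_{ij} / k!, which has infinite radius; hence
   t |-> e^{tA} is differentiable with derivative A e^{tA}. *)

Section MatrixExponential.
Variable n : nat.
Variable A : mat.

Definition growth := 1 + mnorm n A.

Lemma growth_nonneg : 0 <= growth.
Proof. unfold growth. pose proof (mnorm_nonneg n A). lra. Qed.

Lemma mpow_bound k i j : (i < n)%nat -> Rabs (mpow n A k i j) <= growth ^ k.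
Proof.
  revert i j. induction k as [|k IH]; intros i j Hi; simpl.
  - unfold mid. destruct (Nat.eqb i j); rewrite ?Rabs_R1, ?Rabs_R0; lra.
  - unfold mmul. eapply Rle_trans; [apply vsum_abs|].
    apply Rle_trans with (vsum n (fun l => Rabs (A i l)) * growth ^ k).
    + rewrite <- vsum_scal_r. apply vsum_le; intros l Hl.
      rewrite Rabs_mult. apply Rmult_le_compat_l; [apply Rabs_pos|auto].
    + apply Rmult_le_compat_r; [apply pow_le, growth_nonneg|].
      assert (vsum n (fun l => Rabs (A i l)) <= mnorm n A); [|unfold growth; lra].
      apply (vsum_term_le n (fun i => vsum n (fun j => Rabs (A i j)))); auto.
      intros; apply vsum_nonneg; intros; apply Rabs_pos.
Qed.

Definition expm_coef i j k := mpow n A k i j / INR (fact k).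

Lemma expm_coef_radius i j x : (i < n)%nat -> Rbar_lt (Rabs x) (CV_radius (expm_coef i j)).
Proof.
  intros Hi. destruct (CV_radius_bounded (expm_coef i j)) as [Hub _].
  assert (Hin : forall r, 0 <= r -> Rbar_le r (CV_radius (expm_coef i j))).
  { intros r Hr. apply Hub.
    (* |(A^k)_{ij} r^k / k!| <= (growth r)^k / k!, a bounded sequence *)
    destruct (filterlim_bounded (V := R_NormedModule) (fun k => (growth * r) ^ k / INR (fact k)))
      as [M HM]; [exists 0; apply is_lim_seq_Reals, cv_speed_pow_fact|].
    exists M. intros k. eapply Rle_trans; [|apply (HM k)].
    assert (Hf : 0 < / INR (fact k)) by (apply Rinv_0_lt_compat, lt_0_INR, lt_O_fact).
    pose proof growth_nonneg. pose proof (pow_le r k Hr).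
    unfold expm_coef, Rdiv.
    rewrite (Rabs_pos_eq ((growth * r) ^ k * _)) by (apply Rmult_le_pos; [apply pow_le; nra|lra]).
    rewrite !Rabs_mult, (Rabs_pos_eq (/ _)), (Rabs_pos_eq (r ^ k)) by lra.
    rewrite Rpow_mult_distr. pose proof (mpow_bound k i j Hi).
    apply Rle_trans with (growth ^ k * / INR (fact k) * r ^ k); [|right; ring].
    apply Rmult_le_compat_r; [lra|]. apply Rmult_le_compat_r; lra. }
  specialize (Hin (Rabs x + 1) ltac:(pose proof (Rabs_pos x); lra)).
  destruct (CV_radius (expm_coef i j)); simpl in *; auto; lra.
Qed.

Lemma expm_PSeries t i j : (i < n)%nat -> expm n A t i j = PSeries (expm_coef i j) t.
Proof.
  intros Hi. unfold expm.
  assert (Hcv : Un_cv (fun N => sum_f_R0 (fun k => t ^ k / INR (fact k) * mpow n A k i j) N)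
                      (PSeries (expm_coef i j) t)).
  { pose proof (PSeries_correct (expm_coef i j) t
                  (CV_radius_inside _ _ (expm_coef_radius i j t Hi))) as H.
    apply is_pseries_R, is_series_Reals in H.
    intros eps Heps. destruct (H eps Heps) as [N HN]. exists N. intros m Hm.
    rewrite (sum_eq _ (fun k => expm_coef i j k * t ^ k)); [apply HN; auto|].
    intros; unfold expm_coef, Rdiv; ring. }
  pose proof (epsilon_spec (inhabits 0) _ (ex_intro _ _ Hcv)) as Heps.
  eapply UL_sequence; eauto.
Qed.

Lemma PSeries_vsum (b : nat -> nat -> R) (c : nat -> R) m x :
  (forall l, (l < m)%nat -> ex_pseries (b l) x) ->
  ex_pseries (fun k => vsum m (fun l => c l * b l k)) x /\
  PSeries (fun k => vsum m (fun l => c l * b l k)) x = vsum m (fun l => c l * PSeries (b l) x).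
Proof.
  induction m as [|m IH]; intros H; simpl.
  - split; [apply CV_radius_inside; rewrite CV_radius_const_0; simpl; auto|].
    apply PSeries_const_0.
  - destruct IH as [IH1 IH2]; [intros; apply H; lia|].
    assert (Hs : ex_pseries (PS_scal (c m) (b m)) x).
    { apply ex_pseries_scal; [apply Rmult_comm|apply H; lia]. }
    split.
    + apply (ex_pseries_ext (PS_plus (fun k => vsum m (fun l => c l * b l k)) (PS_scal (c m) (b m))));
        [reflexivity|apply ex_pseries_plus; auto].
    + rewrite (PSeries_ext _ (PS_plus (fun k => vsum m (fun l => c l * b l k)) (PS_scal (c m) (b m))))
        by reflexivity.
      rewrite PSeries_plus, IH2, PSeries_scal; auto.
Qed.

Lemma expm_derive t i j : (i < n)%nat ->
  derivable_pt_lim (fun s => expm n A s i j) t (vsum n (fun l => A i l * expm n A t l j)).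
Proof.
  intros Hi.
  replace (fun s => expm n A s i j) with (PSeries (expm_coef i j))
    by (apply functional_extensionality; intros s; rewrite expm_PSeries; auto).
  apply is_derive_Reals.
  replace (vsum n (fun l => A i l * expm n A t l j)) with (PSeries (PS_derive (expm_coef i j)) t);
    [apply is_derive_PSeries, expm_coef_radius; auto|].
  (* the derived series has coefficients (A * A^k)_{ij} / k! = sum_l A_il (A^k)_lj / k! *)
  rewrite (PSeries_ext _ (fun k => vsum n (fun l => A i l * expm_coef l j k))).
  - rewrite (proj2 (PSeries_vsum (fun l => expm_coef l j) (fun l => A i l) n t
      (fun l Hl => CV_radius_inside _ _ (expm_coef_radius l j t Hl)))).
    apply vsum_ext; intros l Hl. rewrite expm_PSeries; auto.
  - intros k. unfold PS_derive, expm_coef. simpl (mpow n A (S k)). unfold mmul.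
    rewrite (vsum_ext n (fun l => A i l * (mpow n A k l j / INR (fact k)))
                        (fun l => (A i l * mpow n A k l j) * / INR (fact k)))
      by (intros; unfold Rdiv; ring).
    rewrite vsum_scal_r, fact_simpl, mult_INR.
    assert (0 < INR (fact k)) by apply lt_0_INR, lt_O_fact.
    assert (0 < INR (S k)) by (apply lt_0_INR; lia).
    field. lra.
Qed.

Lemma expm_cont t i j : (i < n)%nat -> continuity_pt (fun s => expm n A s i j) t.
Proof. intros Hi. apply derivable_continuous_pt. eexists. apply expm_derive; auto. Qed.

Definition flow (s : R) (y : vec) : vec := mvec n (expm n A s) y.

Lemma flow_derive s y i : (i < n)%nat ->
  derivable_pt_lim (fun r => flow r y i) s (mvec n A (flow s y) i).
Proof.
  intros Hi.
  replace (mvec n A (flow s y) i)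
    with (vsum n (fun l => vsum n (fun m => A i m * expm n A s m l) * y l)).
  - apply derive_vsum. intros l Hl.
    replace (vsum n (fun m => A i m * expm n A s m l) * y l)
      with (vsum n (fun m => A i m * expm n A s m l) * y l + expm n A s i l * 0) by ring.
    apply (derivable_pt_lim_mult (fun r => expm n A r i l) (fun _ => y l));
      [apply expm_derive; auto|apply derivable_pt_lim_const].
  - unfold flow, mvec.
    transitivity (vsum n (fun l => vsum n (fun m => A i m * (expm n A s m l * y l)))).
    + apply vsum_ext; intros. rewrite <- vsum_scal_r. apply vsum_ext; intros; ring.
    + rewrite vsum_swap. apply vsum_ext; intros. apply vsum_scal_l.
Qed.

Lemma flow_0 y i : (i < n)%nat -> flow 0 y i = y i.
Proof.
  intros Hi. unfold flow, mvec. rewrite <- (vsum_mid n i y Hi). apply vsum_ext; intros l Hl.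
  rewrite expm_PSeries, PSeries_0 by auto. unfold expm_coef. simpl. unfold Rdiv. rewrite Rinv_1. ring.
Qed.
End MatrixExponential.

Definition solves_on n A (x : R -> vec) a b (z : vec) : Prop :=
  (forall s, a < s < b -> forall i, (i < n)%nat ->
     derivable_pt_lim (fun r => x r i) s (mvec n A (x s) i)) /\
  (forall i, (i < n)%nat -> right_lim (fun r => x r i) a (z i)).

Definition left_cont_at n (x : R -> vec) b : Prop :=
  forall i, (i < n)%nat -> left_lim (fun r => x r i) b (x b i).

Lemma at_right_interval a b : a < b -> at_right a (fun s => a < s < b).
Proof.
  intros Hab. exists (mkposreal (b - a) ltac:(lra)). intros y Hy Hay.
  assert (Hy' : Rabs (y - a) < b - a) by exact Hy. apply Rabs_lt_between in Hy'. lra.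
Qed.

Lemma at_left_interval a b : a < b -> at_left b (fun s => a < s < b).
Proof.
  intros Hab. exists (mkposreal (b - a) ltac:(lra)). intros y Hy Hyb.
  assert (Hy' : Rabs (y - b) < b - a) by exact Hy. apply Rabs_lt_between in Hy'. lra.
Qed.

Lemma nonincreasing f df s t : s < t ->
  (forall r, s <= r <= t -> derivable_pt_lim f r (df r)) ->
  (forall r, s <= r <= t -> df r <= 0) -> f t <= f s.
Proof.
  intros Hst Hd Hn.
  destruct (MVT_gen f s t df) as [c [Hc Heq]].
  - intros r Hr. rewrite Rmin_left, Rmax_right in Hr by lra. apply is_derive_Reals, Hd; lra.
  - intros r Hr. rewrite Rmin_left, Rmax_right in Hr by lra.
    apply derivable_continuous_pt. exists (df r). apply Hd; lra.
  - rewrite Rmin_left, Rmax_right in Hc by lra. pose proof (Hn c Hc). nra.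
Qed.

Lemma ss_derive n A (y : R -> vec) s :
  (forall i, (i < n)%nat -> derivable_pt_lim (fun r => y r i) s (mvec n A (y s) i)) ->
  derivable_pt_lim (fun r => ss n (y r)) s (2 * quad n A (y s)).
Proof.
  intros H.
  replace (2 * quad n A (y s))
    with (vsum n (fun i => mvec n A (y s) i * y s i + y s i * mvec n A (y s) i)).
  - apply (derive_vsum n (fun i r => y r i * y r i)). intros l Hl.
    apply (derivable_pt_lim_mult (fun r => y r l) (fun r => y r l)); apply H; auto.
  - unfold quad. rewrite <- vsum_scal_l. apply vsum_ext; intros; ring.
Qed.

(* Gronwall: |x(t)|^2 <= e^{2 L (t - a)} |z|^2 with L = mnorm A, since
   s |-> e^{-2 L (s - a)} |x(s)|^2 is nonincreasing. *)
Lemma gronwall n A x a b z : a < b -> solves_on n A x a b z ->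
  forall t, a < t < b -> ss n (x t) <= exp (2 * mnorm n A * (t - a)) * ss n z.
Proof.
  intros Hab [Hd Hr] t Ht. set (L := mnorm n A).
  set (e := fun s => exp (- (2 * L * (s - a)))).
  assert (He : forall s, derivable_pt_lim e s (e s * (- (2 * L)))).
  { intros s. apply (derivable_pt_lim_comp (fun s => - (2 * L * (s - a))) exp).
    - replace (- (2 * L)) with (- (2 * L * (1 - 0))) by ring.
      apply derivable_pt_lim_opp, derivable_pt_lim_scal, derivable_pt_lim_minus;
        [apply derivable_pt_lim_id|apply derivable_pt_lim_const].
    - apply derivable_pt_lim_exp. }
  set (g := fun s => e s * ss n (x s)).
  assert (Hdec : forall s, a < s < t -> g t <= g s).
  { intros s Hs. apply (nonincreasing g
      (fun r => e r * (- (2 * L)) * ss n (x r) + e r * (2 * quad n A (x r)))); [lra| |].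
    - intros r Hrs. apply (derivable_pt_lim_mult e (fun r => ss n (x r))); auto.
      apply ss_derive, Hd. lra.
    - intros r Hrs. pose proof (quad_bound n A (x r)) as Hq. apply Rabs_le_between in Hq.
      assert (0 < e r) by apply exp_pos. pose proof (ss_nonneg n (x r)). fold L in Hq. nra. }
  assert (Hlim : filterlim g (at_right a) (locally (e a * ss n z))).
  { apply (lim_mult (at_right a)).
    - apply (cont_lim (at_right a) e); [|apply filter_le_within].
      apply derivable_continuous_pt. eexists. apply He.
    - apply (lim_ss (at_right a)). intros i Hi. apply right_lim_iff, Hr; auto. }
  assert (Hea : e a = 1) by (unfold e; rewrite <- exp_0; f_equal; ring).
  assert (Hgt : g t <= e a * ss n z).
  { apply (filterlim_le (F := at_right a) (fun _ => g t) g (g t) (e a * ss n z));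
      [|apply filterlim_const|exact Hlim].
    apply (filter_imp (fun s => a < s < t)); [apply Hdec|apply at_right_interval; lra]. }
  rewrite Hea, Rmult_1_l in Hgt. unfold g, e in Hgt.
  replace (ss n (x t)) with (exp (2 * L * (t - a)) * (exp (- (2 * L * (t - a))) * ss n (x t)))
    by (rewrite <- Rmult_assoc, <- exp_plus, Rplus_opp_r, exp_0; ring).
  apply Rmult_le_compat_l; [left; apply exp_pos|exact Hgt].
Qed.

Lemma shifted_flow_derive n A a z s i : (i < n)%nat ->
  derivable_pt_lim (fun r => flow n A (r - a) z i) s (mvec n A (flow n A (s - a) z) i).
Proof.
  intros Hi. rewrite <- (Rmult_1_r (mvec n A _ i)).
  apply (derivable_pt_lim_comp (fun r => r - a) (fun r => flow n A r z i));
    [|apply flow_derive; auto].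
  replace 1 with (1 - 0) by ring.
  apply derivable_pt_lim_minus; [apply derivable_pt_lim_id|apply derivable_pt_lim_const].
Qed.

Lemma shifted_flow_cont n A a z s i : (i < n)%nat ->
  continuity_pt (fun r => flow n A (r - a) z i) s.
Proof. intros Hi. apply derivable_continuous_pt. eexists. apply shifted_flow_derive; auto. Qed.

Lemma flow_solves n A a b z : solves_on n A (fun r => flow n A (r - a) z) a b z.
Proof.
  split; [intros s _ i Hi; apply shifted_flow_derive; auto|].
  intros i Hi. apply right_lim_iff.
  replace (z i) with (flow n A (a - a) z i) by (rewrite Rminus_diag; apply flow_0; auto).
  apply (cont_lim (at_right a) (fun r => flow n A (r - a) z i));
    [apply shifted_flow_cont; auto|apply filter_le_within].
Qed.

Lemma solves_on_minus n A x y a b zx zy :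
  solves_on n A x a b zx -> solves_on n A y a b zy ->
  solves_on n A (fun r i => x r i - y r i) a b (fun i => zx i - zy i).
Proof.
  intros [Hdx Hrx] [Hdy Hry]. split.
  - intros s Hs i Hi. rewrite mvec_minus.
    apply (derivable_pt_lim_minus (fun r => x r i) (fun r => y r i)); auto.
  - intros i Hi. apply right_lim_iff, (lim_minus (at_right a)); apply right_lim_iff; auto.
Qed.

Lemma solves_on_unique n A x a b z : a < b -> solves_on n A x a b z ->
  forall t, a < t < b -> forall i, (i < n)%nat -> x t i = flow n A (t - a) z i.
Proof.
  intros Hab Hx t Ht.
  pose proof (gronwall n A _ a b _ Hab (solves_on_minus n A _ _ a b _ _ Hx (flow_solves n A a b z)) t Ht)
    as Hgr.
  assert (Hz : ss n (fun i => z i - z i) = 0).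
  { unfold ss. rewrite <- (vsum_zero n). apply vsum_ext; intros; ring. }
  rewrite Hz, Rmult_0_r in Hgr.
  intros i Hi. pose proof (ss_zero_coord n _ Hgr i Hi). simpl in *. lra.
Qed.

Lemma solves_on_repr n A x a b z : a < b -> solves_on n A x a b z -> left_cont_at n x b ->
  forall t, a < t <= b -> forall i, (i < n)%nat -> x t i = flow n A (t - a) z i.
Proof.
  intros Hab Hx Hl t Ht i Hi.
  destruct (Req_dec t b) as [->|Htb]; [|apply (solves_on_unique n A x a b); auto; lra].
  apply (filterlim_locally_unique (F := at_left b) (fun r => x r i)).
  - apply left_lim_iff, Hl; auto.
  - apply (filterlim_ext_loc (fun r => flow n A (r - a) z i)).
    + apply (filter_imp (fun s => a < s < b)); [|apply at_left_interval; auto].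
      intros s Hs. symmetry. apply (solves_on_unique n A x a b); auto.
    + apply (cont_lim (at_left b) (fun r => flow n A (r - a) z i));
        [apply shifted_flow_cont; auto|apply filter_le_within].
Qed.

Lemma exp_le_mono x y : x <= y -> exp x <= exp y.
Proof. intros H. destruct (Req_dec x y) as [->|]; [lra|left; apply exp_increasing; lra]. Qed.

Lemma flow_growth n A s z : 0 <= s -> ss n (flow n A s z) <= exp (2 * mnorm n A * s) * ss n z.
Proof.
  intros Hs. destruct (Req_dec s 0) as [->|Hs0].
  - rewrite Rmult_0_r, exp_0, Rmult_1_l. right. apply ss_ext. intros; apply flow_0; auto.
  - pose proof (gronwall n A _ 0 (s + 1) z ltac:(lra) (flow_solves n A 0 (s + 1) z) s ltac:(lra))
      as Hgr.
    rewrite !Rminus_0_r in Hgr. exact Hgr.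
Qed.

Lemma solves_on_bound n A x a b z : a < b -> solves_on n A x a b z -> left_cont_at n x b ->
  forall t, a < t <= b -> ss n (x t) <= exp (2 * mnorm n A * (b - a)) * ss n z.
Proof.
  intros Hab Hx Hl t Ht.
  rewrite (ss_ext n _ _ (solves_on_repr n A x a b z Hab Hx Hl t Ht)).
  eapply Rle_trans; [apply flow_growth; lra|].
  apply Rmult_le_compat_r; [apply ss_nonneg|]. apply exp_le_mono.
  pose proof (mnorm_nonneg n A). nra.
Qed.

Section ImpulseSequence.
Variables (Tmin Tmax t0 : R) (tseq : nat -> R).
Hypothesis hT0 : 0 < Tmin.
Hypothesis hseq : impulse_seq_in t0 Tmin Tmax tseq.

Lemma tseq_lt m k : (m < k)%nat -> tseq m < tseq k.
Proof.
  destruct hseq as [_ Hgap]. induction 1 as [|k _ IH];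
    [specialize (Hgap m)|specialize (Hgap k)]; lra.
Qed.

Lemma tseq_le m k : (m <= k)%nat -> tseq m <= tseq k.
Proof.
  intros H. destruct (Nat.eq_dec m k) as [->|]; [lra|]. left; apply tseq_lt; lia.
Qed.

Lemma tseq_grow k : tseq 0 + INR k * Tmin <= tseq k.
Proof.
  destruct hseq as [_ Hgap]. induction k as [|k IH]; [simpl; lra|].
  specialize (Hgap k). rewrite S_INR. lra.
Qed.

Lemma locate t : tseq 0 < t -> exists k, tseq k < t <= tseq (S k).
Proof.
  intros Ht. destruct (INR_archimed Tmin (t - tseq 0) hT0) as [N HN].
  assert (HtN : t <= tseq N) by (pose proof (tseq_grow N); lra).
  clear HN. induction N as [|N IH]; [lra|].
  destruct (Rle_or_lt t (tseq N)); [apply IH; auto|exists N; lra].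
Qed.

Lemma solution_pieces n A J x0 x : is_solution n A J t0 tseq x0 x ->
  (solves_on n A x t0 (tseq 0) x0 /\ left_cont_at n x (tseq 0)) /\
  forall k, solves_on n A x (tseq k) (tseq (S k)) (mvec n J (x (tseq k))) /\
            left_cont_at n x (tseq (S k)).
Proof.
  intros [_ [Hr0 [Hd [Hl Hjump]]]]. destruct hseq as [Ht0 _].
  assert (Hpos : forall k, t0 < tseq k) by (intros k; pose proof (tseq_le 0 k ltac:(lia)); lra).
  assert (Hfree : forall s, t0 < s -> (forall m, tseq m <> s) ->
            forall i, (i < n)%nat -> derivable_pt_lim (fun r => x r i) s (mvec n A (x s) i)).
  { intros s Hs Hm. apply Hd; auto. intros [m Em]. apply (Hm m Em). }
  split; [split; [split|]|intros k; split; [split|]].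
  - intros s Hs. apply Hfree; [lra|]. intros m Em. pose proof (tseq_le 0 m ltac:(lia)). lra.
  - exact Hr0.
  - intros i Hi. apply Hl; auto.
  - intros s Hs. apply Hfree; [pose proof (Hpos k); lra|]. intros m Em.
    destruct (Nat.le_gt_cases m k) as [Hm|Hm];
      [pose proof (tseq_le m k Hm)|pose proof (tseq_le (S k) m Hm)]; lra.
  - intros i Hi. apply Hjump; auto.
  - intros i Hi. apply Hl; auto.
Qed.

Lemma GAS_of_geometric_decay n A J B rho : 0 <= B -> 0 <= rho < 1 ->
  (forall x0 x, is_solution n A J t0 tseq x0 x ->
     (forall s, t0 < s <= tseq 0 -> ss n (x s) <= B * ss n x0) /\
     (forall k s, tseq k < s <= tseq (S k) -> ss n (x s) <= B * rho ^ k * ss n x0)) ->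
  GAS n A J t0 tseq.
Proof.
  intros HB Hrho Hdecay.
  assert (Hall : forall x0 x, is_solution n A J t0 tseq x0 x ->
            forall s, t0 <= s -> ss n (x s) <= (B + 1) * ss n x0).
  { intros x0 x Hx s Hs. destruct (Hdecay x0 x Hx) as [H0 Hk].
    pose proof (ss_nonneg n x0).
    destruct (Req_dec s t0) as [->|Hne].
    { destruct Hx as [Hx0 _]. rewrite (ss_ext n _ _ Hx0). nra. }
    destruct (Rle_or_lt s (tseq 0)) as [Hle|Hlt]; [pose proof (H0 s ltac:(lra)); nra|].
    destruct (locate s Hlt) as [k Hks]. pose proof (Hk k s Hks).
    assert (rho ^ k <= 1) by (rewrite <- (pow1 k); apply pow_incr; lra).
    pose proof (pow_le rho k (proj1 Hrho)).
    assert (B * rho ^ k * ss n x0 <= B * ss n x0); [|nra].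
    apply Rmult_le_compat_r; [lra|]. nra. }
  split.
  - intros eps Heps. set (C := B + 1). assert (HC : 1 <= C) by (unfold C; lra).
    exists (eps / C). split; [apply Rdiv_lt_0_compat; lra|].
    intros x0 x Hx Hx0 s Hs. apply vnorm_lt_of_ss; auto.
    pose proof (ss_lt_of_vnorm_lt n x0 _ Hx0). pose proof (Hall x0 x Hx s Hs).
    apply Rle_lt_trans with (C * ss n x0); auto.
    apply Rlt_le_trans with (C * (eps / C * (eps / C))); [apply Rmult_lt_compat_l; lra|].
    replace (C * (eps / C * (eps / C))) with (eps * eps * / C) by (field; lra).
    rewrite <- (Rmult_1_r (eps * eps)) at 2. apply Rmult_le_compat_l; [nra|].
    rewrite <- Rinv_1. apply Rinv_le_contravar; lra.
  - intros x0 x Hx eps Heps. destruct (Hdecay x0 x Hx) as [_ Hk].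
    set (D := B * ss n x0 + 1).
    assert (HD : 0 < D) by (pose proof (ss_nonneg n x0); unfold D; nra).
    destruct (pow_lt_1_zero rho ltac:(rewrite Rabs_pos_eq; lra) (eps * eps / D)) as [N HN];
      [apply Rdiv_lt_0_compat; nra|].
    exists (tseq N + 1). intros s Hs.
    destruct (locate s ltac:(pose proof (tseq_le 0 N ltac:(lia)); lra)) as [k Hks].
    assert (HkN : (N <= k)%nat).
    { destruct (Nat.le_gt_cases N k) as [|Hlt]; auto. pose proof (tseq_le (S k) N Hlt). lra. }
    specialize (HN k HkN). rewrite Rabs_pos_eq in HN by (apply pow_le; lra).
    apply vnorm_lt_of_ss; auto. eapply Rle_lt_trans; [apply Hk, Hks|].
    apply Rle_lt_trans with (D * rho ^ k).
    + pose proof (pow_le rho k (proj1 Hrho)). pose proof (ss_nonneg n x0). unfold D. nra.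
    + replace (eps * eps) with (D * (eps * eps / D)) by (field; lra).
      apply Rmult_lt_compat_l; auto.
Qed.

End ImpulseSequence.

Definition jump_form n A J P theta : mat :=
  msub (mmul n (mtr J) (mmul n (mtr (expm n A theta)) (mmul n P (mmul n (expm n A theta) J)))) P.

Lemma jump_form_quad n A J P theta v :
  quad n P (flow n A theta (mvec n J v)) = quad n P v + quad n (jump_form n A J P theta) v.
Proof. unfold jump_form, flow. rewrite quad_msub, quad_congr. ring. Qed.

Lemma jump_form_cont n A J P i j theta : (i < n)%nat -> (j < n)%nat ->
  continuity_pt (fun t => jump_form n A J P t i j) theta.
Proof.
  intros Hi Hj.
  assert (Hc : forall c : R, continuity_pt (fun _ => c) theta)
    by (intros; apply continuity_pt_const; intros u v; auto).
  unfold jump_form, msub, mmul, mtr.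
  apply continuity_pt_minus; [|apply Hc].
  apply cont_vsum; intros k1 Hk1. apply continuity_pt_mult; [apply Hc|].
  apply cont_vsum; intros k2 Hk2. apply continuity_pt_mult; [apply expm_cont; auto|].
  apply cont_vsum; intros k3 Hk3. apply continuity_pt_mult; [apply Hc|].
  apply cont_vsum; intros k4 Hk4. apply continuity_pt_mult; [apply expm_cont; auto|apply Hc].
Qed.

Lemma jump_contraction n A J P Tmin Tmax : Tmin <= Tmax -> pos_def n P ->
  (forall theta, Tmin <= theta <= Tmax -> neg_def n (jump_form n A J P theta)) ->
  exists rho, 0 <= rho < 1 /\ forall theta v, Tmin <= theta <= Tmax ->
    quad n P (flow n A theta (mvec n J v)) <= rho * quad n P v.
Proof.
  intros hT HP Hneg.
  destruct (unif_neg_def n (jump_form n A J P) Tmin Tmax) as [c [Hc Hunif]]; auto.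
  { intros i j Hi Hj theta _. apply jump_form_cont; auto. }
  destruct (pos_def_coercive n P HP) as [c1 [Hc1 Hcoer]].
  set (CP := mnorm n P + 1).
  assert (HCP : 0 < CP) by (unfold CP; pose proof (mnorm_nonneg n P); lra).
  assert (Hupper : forall v, quad n P v <= CP * ss n v).
  { intros v. pose proof (quad_bound n P v) as H. apply Rabs_le_between in H.
    pose proof (ss_nonneg n v). unfold CP. nra. }
  exists (Rmax 0 (1 - c / CP)). split.
  { split; [apply Rmax_l|]. apply Rmax_lub_lt; [lra|].
    assert (0 < c / CP) by (apply Rdiv_lt_0_compat; auto). lra. }
  intros theta v Htheta. rewrite jump_form_quad.
  pose proof (Hunif theta v Htheta). pose proof (Hupper v). pose proof (Hcoer v).
  pose proof (ss_nonneg n v).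
  (* V + Q <= V - c |v|^2 <= (1 - c / CP) V <= rho V *)
  assert (Hss : quad n P v / CP <= ss n v).
  { apply Rmult_le_reg_r with CP; auto. unfold Rdiv. rewrite Rmult_assoc, Rinv_l; lra. }
  assert ((1 - c / CP) * quad n P v <= Rmax 0 (1 - c / CP) * quad n P v)
    by (apply Rmult_le_compat_r; [nra|apply Rmax_r]).
  assert (c * (quad n P v / CP) <= c * ss n v) by (apply Rmult_le_compat_l; lra).
  unfold Rdiv in *. nra.
Qed.

Section Decay.
Variables (n : nat) (A J P : mat) (Tmin Tmax t0 rho : R) (tseq : nat -> R).
Hypothesis hT0 : 0 < Tmin.
Hypothesis hseq : impulse_seq_in t0 Tmin Tmax tseq.
Hypothesis HP : pos_def n P.
Hypothesis Hrho : 0 <= rho.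
Hypothesis Hcontr : forall theta v, Tmin <= theta <= Tmax ->
  quad n P (flow n A theta (mvec n J v)) <= rho * quad n P v.

Lemma lyapunov_at_impulses x0 x : is_solution n A J t0 tseq x0 x ->
  forall k, quad n P (x (tseq k)) <= rho ^ k * quad n P (x (tseq 0)).
Proof.
  intros Hx. destruct (solution_pieces Tmin Tmax t0 tseq hT0 hseq n A J x0 x Hx) as [_ Hpieces].
  destruct hseq as [_ Hgap].
  induction k as [|k IH]; [simpl; lra|].
  destruct (Hpieces k) as [Hsol Hl]. pose proof (Hgap k) as Hk.
  (* the state at the next impulse is the flow, over the dwell time, of the jump J x *)
  rewrite (quad_ext n P _ _
    (solves_on_repr n A x (tseq k) (tseq (S k)) _ ltac:(lra) Hsol Hl (tseq (S k)) ltac:(lra))).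
  eapply Rle_trans; [apply Hcontr; lra|]. simpl. rewrite Rmult_assoc.
  apply Rmult_le_compat_l; auto.
Qed.

Lemma interval_growth x0 x : is_solution n A J t0 tseq x0 x ->
  forall k s, tseq k < s <= tseq (S k) ->
  ss n (x s) <= exp (2 * mnorm n A * Tmax) * mnorm n (mmul n (mtr J) J) * ss n (x (tseq k)).
Proof.
  intros Hx k s Hs. destruct (solution_pieces Tmin Tmax t0 tseq hT0 hseq n A J x0 x Hx) as [_ Hpieces].
  destruct (Hpieces k) as [Hsol Hl]. destruct hseq as [_ Hgap]. pose proof (Hgap k).
  eapply Rle_trans; [apply (solves_on_bound n A x (tseq k) (tseq (S k)) _ ltac:(lra) Hsol Hl s Hs)|].
  rewrite (Rmult_assoc (exp _)).
  apply Rmult_le_compat; [left; apply exp_pos|apply ss_nonneg| |apply ss_mvec_le].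
  apply exp_le_mono. pose proof (mnorm_nonneg n A). nra.
Qed.

Lemma solution_geometric_bound : exists B, 0 <= B /\
  forall x0 x, is_solution n A J t0 tseq x0 x ->
    (forall s, t0 < s <= tseq 0 -> ss n (x s) <= B * ss n x0) /\
    (forall k s, tseq k < s <= tseq (S k) -> ss n (x s) <= B * rho ^ k * ss n x0).
Proof.
  destruct (pos_def_coercive n P HP) as [c1 [Hc1 Hcoer]].
  set (K0 := exp (2 * mnorm n A * (tseq 0 - t0))).
  set (K := exp (2 * mnorm n A * Tmax) * mnorm n (mmul n (mtr J) J)).
  set (CP := mnorm n P + 1).
  assert (HK0 : 0 < K0) by apply exp_pos.
  assert (HK : 0 <= K) by (apply Rmult_le_pos; [left; apply exp_pos|apply mnorm_nonneg]).
  assert (HCP : 0 < CP) by (unfold CP; pose proof (mnorm_nonneg n P); lra).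
  assert (HD : 0 <= K * CP * K0 / c1).
  { apply Rmult_le_pos; [apply Rmult_le_pos; [apply Rmult_le_pos|]; lra|].
    left; apply Rinv_0_lt_compat; lra. }
  exists (K0 + K * CP * K0 / c1). split; [lra|].
  intros x0 x Hx. destruct (solution_pieces Tmin Tmax t0 tseq hT0 hseq n A J x0 x Hx)
    as [[Hsol0 Hl0] _].
  destruct hseq as [Ht0 _]. pose proof (ss_nonneg n x0).
  assert (Hfirst : forall s, t0 < s <= tseq 0 -> ss n (x s) <= K0 * ss n x0)
    by exact (solves_on_bound n A x t0 (tseq 0) x0 Ht0 Hsol0 Hl0).
  (* at the impulse times: c1 |x(t_k)|^2 <= V(x(t_k)) <= rho^k V(x(t_0)) <= rho^k CP K0 |x0|^2,
     writing t_k for [tseq k] *)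
  assert (Himp : forall k, ss n (x (tseq k)) <= rho ^ k * (CP * K0) / c1 * ss n x0).
  { intros k. pose proof (lyapunov_at_impulses x0 x Hx k). pose proof (Hcoer (x (tseq k))).
    pose proof (quad_bound n P (x (tseq 0))) as Hq. apply Rabs_le_between in Hq.
    pose proof (Hfirst (tseq 0) ltac:(lra)). pose proof (pow_le rho k Hrho).
    apply Rmult_le_reg_l with c1; auto.
    replace (c1 * (rho ^ k * (CP * K0) / c1 * ss n x0)) with (rho ^ k * (CP * (K0 * ss n x0)))
      by (field; lra).
    assert (quad n P (x (tseq 0)) <= CP * (K0 * ss n x0)).
    { unfold CP. pose proof (ss_nonneg n (x (tseq 0))). pose proof (mnorm_nonneg n P). nra. }
    nra. }
  split.
  - intros s Hs. pose proof (Hfirst s Hs). assert (0 <= K * CP * K0 / c1 * ss n x0) by nra. nra.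
  - intros k s Hs. eapply Rle_trans; [apply (interval_growth x0 x Hx k s Hs)|].
    fold K. pose proof (Himp k). pose proof (pow_le rho k Hrho).
    replace ((K0 + K * CP * K0 / c1) * rho ^ k * ss n x0)
      with (K0 * rho ^ k * ss n x0 + K * (rho ^ k * (CP * K0) / c1 * ss n x0)) by (field; lra).
    assert (0 <= K0 * rho ^ k * ss n x0) by (apply Rmult_le_pos; [apply Rmult_le_pos|]; lra).
    assert (K * ss n (x (tseq k)) <= K * (rho ^ k * (CP * K0) / c1 * ss n x0))
      by (apply Rmult_le_compat_l; auto).
    lra.
Qed.
End Decay.

Theorem lemma1 (n : nat) (A J : mat) (Tmin Tmax : R)
  (hT0 : 0 < Tmin) (hT : Tmin <= Tmax)
  (hP : exists P : mat, symmetric n P /\ pos_def n P /\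
     forall theta, Tmin <= theta <= Tmax ->
       neg_def n (msub (mmul n (mtr J) (mmul n (mtr (expm n A theta))
                          (mmul n P (mmul n (expm n A theta) J)))) P)) :
  forall (t0 : R) (tseq : nat -> R),
    impulse_seq_in t0 Tmin Tmax tseq -> GAS n A J t0 tseq.
Proof.
  intros t0 tseq hseq. destruct hP as [P [_ [HP Hneg]]].
  destruct (jump_contraction n A J P Tmin Tmax hT HP Hneg) as [rho [Hrho Hcontr]].
  destruct (solution_geometric_bound n A J P Tmin Tmax t0 rho tseq hT0 hseq HP (proj1 Hrho) Hcontr)
    as [B [HB Hdecay]].
  exact (GAS_of_geometric_decay Tmin Tmax t0 tseq hT0 hseq n A J B rho HB Hrho Hdecay).
Qed.
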